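(* Let $G$ be a connected graph with a cut-vertex $v$, and let $R\subseteq V(G)$ be such that at least two connected components of $G-v$ contain elements of $R$. If $x,y\in V(G)$ satisfy $d(v,x)\neq d(v,y)$, then there exists $r\in R$ with $r\neq v$ such that $d(r,x)\neq d(r,y)$.
   Context: All graphs are finite and simple. For vertices $u,w$ of a connected graph $G$, $d(u,w)$ is the length of a shortest $u$–$w$ path in $G$. A cut-vertex is a vertex $v$ such that $G-v$ is disconnected. $R$ need not be a resolving set. *)

From mathcomp Require Import all_boot.
Set Implicit Arguments.
Unset Strict Implicit.
Unset Printing Implicit Defensive.

Definition simple_graph (T : finType) (e : rel T) : Prop :=
  symmetric e /\ irreflexive e.

Definition connected_graph (T : finType) (e : rel T) : Prop :=
  forall x y : T, connect e x y.

Fixpoint ball (T : finType) (e : rel T) (n : nat) (u : T) : {set T} :=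
  match n with
  | 0 => [set u]
  | n'.+1 => ball e n' u :|: [set y | [exists x in ball e n' u, e x y]]
  end.

(* d(u,w): least n such that w is reachable from u by a walk of length n
   (= length of a shortest u-w path). Meaningful when the graph is connected,
   since any shortest walk has length < #|T|. *)
Definition dist (T : finType) (e : rel T) (u w : T) : nat :=
  find (fun n => w \in ball e n u) (iota 0 #|T|).

Definition del_vertex (T : finType) (e : rel T) (v : T) : rel T :=
  fun x y => [&& x != v, y != v & e x y].

Definition same_comp_minus (T : finType) (e : rel T) (v x y : T) : bool :=
  [&& x != v, y != v & connect (del_vertex e v) x y].

Definition cut_vertex (T : finType) (e : rel T) (v : T) : Prop :=
  exists x y : T, x != v /\ y != v /\ ~~ connect (del_vertex e v) x y.

(* If r lies in a component of G - v other than that of y, every r-y path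
   passes through v, so d(r,y) = d(r,v) + d(v,y), while
   d(r,x) <= d(r,v) + d(v,x); hence d(r,x) = d(r,y) forces d(v,y) <= d(v,x).
   Two vertices of R in different components of G - v cannot both share the
   component of x, nor both share that of y; so if no such r resolved x and y,
   we would get both d(v,y) <= d(v,x) and d(v,x) <= d(v,y). *)
From mathcomp Require Import all_boot.

Set Implicit Arguments.
Unset Strict Implicit.
Unset Printing Implicit Defensive.

Section Distance.
Variables (T : finType) (e : rel T).

Lemma ballP n u w :
  reflect (exists p, [/\ path e u p, last u p = w & size p <= n])
          (w \in ball e n u).
Proof.
elim: n w => [|n IHn] w /=.
  rewrite in_set1; apply: (iffP eqP) => [->|[[|a p] [_ /= <-]]] //.
  by exists [::].
rewrite in_setU in_set; apply: (iffP orP).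
  case=> [/IHn [p [e_p p_w le_p]]|].
    by exists p; split=> //; apply: leqW.
  case/existsP=> z /andP [/IHn [p [e_p p_z le_p]] ezw].
  by exists (rcons p w); rewrite rcons_path e_p p_z ezw last_rcons size_rcons.
case=> p [e_p p_w le_p]; case: (leqP (size p) n) => [le_pn|lt_np].
  by left; apply/IHn; exists p.
right; move: e_p p_w le_p lt_np; case/lastP: p => [|p z] //.
rewrite rcons_path last_rcons size_rcons => /andP [e_p ez] <- le_pn _.
apply/existsP; exists (last u p); rewrite ez andbT.
by apply/IHn; exists p.
Qed.

Lemma has_ball_connect u w :
  connect e u w -> has (fun n => w \in ball e n u) (iota 0 #|T|).
Proof.
case/connectP=> p e_p ->; case: (shortenP e_p) => q e_q uniq_q _.
apply/hasP; exists (size q); last by apply/ballP; exists q.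
rewrite mem_iota /= -ltnS -[(size q).+1]/(size (u :: q)).
by move/card_uniqP: uniq_q => <-; apply: max_card.
Qed.

Lemma dist_lt_card u w : connect e u w -> dist e u w < #|T|.
Proof. by move/has_ball_connect; rewrite has_find size_iota. Qed.

Lemma mem_ball_dist u w : connect e u w -> w \in ball e (dist e u w) u.
Proof.
move=> uw; have := nth_find 0 (has_ball_connect uw).
by rewrite nth_iota ?dist_lt_card.
Qed.

Lemma dist_path_le u p : path e u p -> dist e u (last u p) <= size p.
Proof.
move=> e_p; have uw : connect e u (last u p) by apply/connectP; exists p.
rewrite leqNgt; apply/negP => lt_pd.
have := before_find 0 lt_pd.
rewrite nth_iota ?(ltn_trans lt_pd) ?dist_lt_card // add0n.
by move/negP; apply; apply/ballP; exists p.
Qed.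

Lemma shortest_path u w : connect e u w ->
  exists p, [/\ path e u p, last u p = w & size p = dist e u w].
Proof.
move/mem_ball_dist/ballP=> [p [e_p p_w le_p]]; exists p; split=> //.
by apply/eqP; rewrite eqn_leq le_p -p_w dist_path_le.
Qed.

Lemma dist_triangle u a w : connect e u a -> connect e a w ->
  dist e u w <= dist e u a + dist e a w.
Proof.
move=> /shortest_path [p [e_p p_a <-]] /shortest_path [q [e_q q_w <-]].
rewrite -size_cat -q_w -p_a -last_cat; apply: dist_path_le.
by rewrite cat_path e_p p_a e_q.
Qed.

Lemma dist_through_cut v r x : r != v -> connect e r x ->
  ~~ connect (del_vertex e v) r x -> dist e r x = dist e r v + dist e v x.
Proof.
move=> r_v /shortest_path [p [e_p p_x size_p]] r_x_sep.
have v_in_p : v \in p.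
  apply: contraNT r_x_sep => v_notin_p; apply/connectP; exists p => //.
  apply: (sub_in_path (P := predC1 v)) e_p.
    by move=> a b; rewrite !inE => a_v b_v eab; rewrite /del_vertex a_v b_v.
  by rewrite /= r_v; apply/allP => a /=; apply: contraTneq => ->.
move: e_p p_x size_p; case/path.splitP: v_in_p => p1 p2.
rewrite cat_path last_cat last_rcons size_cat size_rcons.
move=> /andP [e_p1 e_p2] p2_x.
have r_v_conn : connect e r v.
  by apply/connectP; exists (rcons p1 v); rewrite ?last_rcons.
have v_x_conn : connect e v x by apply/connectP; exists p2.
move=> size_p; apply/eqP; rewrite eqn_leq dist_triangle //=.
rewrite -size_p -(size_rcons p1 v) -{1}p2_x leq_add //.
  by rewrite -{1}(last_rcons r p1 v) dist_path_le.
exact: dist_path_le.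
Qed.

Lemma cut_dist_le v r x y : connected_graph e -> r != v ->
  ~~ connect (del_vertex e v) r y -> dist e r x = dist e r y ->
  dist e v y <= dist e v x.
Proof.
move=> e_conn r_v r_y_sep eq_rxy.
rewrite -(leq_add2l (dist e r v)) -dist_through_cut // -eq_rxy.
exact: dist_triangle.
Qed.

End Distance.

Lemma del_vertex_sym (T : finType) (e : rel T) (v : T) :
  symmetric e -> symmetric (del_vertex e v).
Proof. by move=> e_sym a b; rewrite /del_vertex e_sym andbCA. Qed.

Lemma disconnected_common (T : finType) (e : rel T) (a b z : T) :
  connect_sym e -> ~~ connect e a b -> ~~ connect e a z || ~~ connect e b z.
Proof.
move=> e_csym; apply: contraR; rewrite negb_or !negbK => /andP [az bz].
by rewrite (connect_trans az) // e_csym.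
Qed.

Theorem lemma1 (T : finType) (e : rel T) (v : T) (R : {set T}) (x y : T) :
  simple_graph e ->
  connected_graph e ->
  cut_vertex e v ->
  (exists r1 r2 : T, [/\ r1 \in R, r2 \in R, r1 != v, r2 != v &
                        ~~ same_comp_minus e v r1 r2]) ->
  dist e v x <> dist e v y ->
  exists r : T, [/\ r \in R, r != v & dist e r x <> dist e r y].
Proof.
move=> [e_sym _] e_conn _ [r1 [r2 [R_r1 R_r2 r1_v r2_v]]].
rewrite /same_comp_minus r1_v r2_v /= => r12_sep neq_vxy.
have [eq_r1|/eqP ne_r1] := eqVneq (dist e r1 x) (dist e r1 y); last by exists r1.
have [eq_r2|/eqP ne_r2] := eqVneq (dist e r2 x) (dist e r2 y); last by exists r2.
have del_csym := sym_connect_sym (del_vertex_sym v e_sym).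
have le_v z z' : dist e r1 z = dist e r1 z' -> dist e r2 z = dist e r2 z' ->
    dist e v z' <= dist e v z.
  move=> eq1 eq2; case/orP: (disconnected_common z' del_csym r12_sep) => sep.
    exact: cut_dist_le e_conn r1_v sep eq1.
  exact: cut_dist_le e_conn r2_v sep eq2.
by case: neq_vxy; apply/eqP; rewrite eqn_leq !le_v.
Qed.
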